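(* For every $n\ge 1$, the burning number of the directed cycle $C_n$ on $n$ nodes is $\left\lceil \sqrt{2n+\tfrac14}-\tfrac12\right\rceil$.
   Context: Burning process on a digraph $D$: a sequence $(x_1,\ldots,x_b)$ of nodes is a burning sequence for $D$ if after $b$ steps of the following process every node of $D$ is burned; the $i$-th step consists of first burning all out-neighbours of all currently burned nodes, and then burning the node $x_i$. The burning number of $D$ is the length of a shortest burning sequence. Equivalently, with $N^+_k(v)$ the set of nodes reachable from $v$ by a directed path with at most $k$ arcs, the burning number is the least $b$ such that there are nodes $v_1,\ldots,v_b$ with $V(D)=\bigcup_{i=1}^b N^+_{i-1}(v_i)$. *)

From mathcomp Require Import all_boot all_order all_algebra.
From mathcomp Require Import reals.
Set Implicit Arguments. Unset Strict Implicit. Unset Printing Implicit Defensive.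

(* A digraph is a finite type of nodes with an arc relation [arc : rel T]
   (arc u v means there is an arc u -> v). *)

Fixpoint reach (T : finType) (arc : rel T) (k : nat) (v w : T) : bool :=
  if k is k'.+1 then (v == w) || [exists u, arc v u && reach arc k' u w]
  else v == w.

(* s = [:: v_1; ...; v_b] is a burning sequence: V(D) = \bigcup_i N^+_{i-1}(v_i)
   (0-based index i in s covers N^+_i). *)
Definition burning_seq (T : finType) (arc : rel T) (s : seq T) : Prop :=
  forall w : T, exists2 i, i < size s & reach arc i (nth w s i) w.

Definition is_burning_number (T : finType) (arc : rel T) (b : nat) : Prop :=
  (exists2 s : seq T, size s = b & burning_seq arc s) /\
  (forall s : seq T, burning_seq arc s -> b <= size s).

Definition dcycle_arc (n : nat) : rel 'I_n :=
  fun i j => nat_of_ord j == (i.+1 %% n).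

From mathcomp Require Import all_boot all_order all_algebra.
From mathcomp Require Import reals.
From mathcomp Require Import zify ring lra.
Import Order.TTheory GRing.Theory Num.Theory.

Set Implicit Arguments.
Unset Strict Implicit.
Unset Printing Implicit Defensive.

(* In the directed cycle C_n the nodes within k steps of v are v, v+1, ..., v+k
   (mod n), at most k+1 of them, so a burning sequence of length b covers at most
   1 + 2 + ... + b = 'C(b+1, 2) nodes.  Conversely, lighting the i-th fire
   (0-based) at node 'C(i+1, 2) = 0 + 1 + ... + i makes the b balls tile the arc
   [0, 'C(b+1, 2)).  So the burning number is the least b with n <= 'C(b+1, 2),
   i.e. with sqrt(2n + 1/4) - 1/2 <= b, which is the stated ceiling. *)

Lemma card_bigcup_le (T I : finType) (P : pred I) (F : I -> {set T}) :
  #|\bigcup_(i | P i) F i| <= \sum_(i | P i) #|F i|.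
Proof.
apply: (big_ind2 (fun (A : {set T}) k => #|A| <= k)); rewrite ?cards0 //.
by move=> A a B b leA leB; rewrite (leq_trans (leq_card_setU A B)) ?leq_add.
Qed.

Section Burning.

Variables (T : finType) (arc : rel T).

Definition out_ball (k : nat) (v : T) : {set T} := [set w | reach arc k v w].

Lemma burning_seq_card (x0 : T) (s : seq T) : burning_seq arc s ->
  #|T| <= \sum_(i < size s) #|out_ball i (nth x0 s i)|.
Proof.
move=> burn_s; rewrite -cardsT; apply: leq_trans _ (card_bigcup_le _ _).
apply/subset_leq_card/subsetP => w _.
have [i lt_i_s reach_w] := burn_s w.
by apply/bigcupP; exists (Ordinal lt_i_s); rewrite // inE (set_nth_default w).
Qed.

End Burning.

Lemma exists_bracket (f : nat -> nat) (b w : nat) :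
  f 0 <= w < f b -> exists2 i, i < b & f i <= w < f i.+1.
Proof.
elim: b => [|b IH] /andP [ge_w lt_w]; first by rewrite ltnNge ge_w in lt_w.
have [lt_wb | ge_wb] := ltnP w (f b); last by exists b; rewrite ?ge_wb.
by have [|i lt_ib] := IH; [rewrite ge_w | exists i; first exact: ltnW].
Qed.

Lemma bin2S_mul2 (b : nat) : 'C(b.+1, 2) * 2 = b.+1 * b.
Proof. by rewrite bin_ffact ffactSS ffactn1. Qed.

Lemma sum_succ_bin2 (b : nat) : \sum_(i < b) i.+1 = 'C(b.+1, 2).
Proof. by rewrite -bin2_sum big_nat_recl // big_mkord. Qed.

Section DirectedCycle.

Variable m : nat.
Local Notation n := m.+1.
Local Notation arc := (@dcycle_arc n).

Lemma reach_dcycleP (k : nat) (v w : 'I_n) :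
  reflect (exists2 d, d <= k & w = inZp (v + d)) (reach arc k v w).
Proof.
apply: (iffP idP).
- elim: k v => [|k IH] v /=.
    by move/eqP <-; exists 0; rewrite // addn0 valZpK.
  case/orP => [/eqP <- | /existsP [u /andP [/eqP arc_vu /IH [d le_dk ->]]]].
    by exists 0; rewrite // addn0 valZpK.
  by exists d.+1; rewrite //; apply: val_inj; rewrite /= arc_vu modnDml addSnnS.
- case=> d + ->; elim: k v d => [|k IH] v [|d] //= le_dk.
  + by rewrite addn0 valZpK.
  + by rewrite addn0 valZpK eqxx.
  apply/orP; right; apply/existsP; exists (inZp v.+1); rewrite [arc _ _]eqxx /=.
  have -> : @inZp m (v + d.+1) = inZp (@inZp m v.+1 + d).
    by apply: val_inj; rewrite /= modnDml addSnnS.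
  exact: IH.
Qed.

Lemma card_out_ball_dcycle (k : nat) (v : 'I_n) : #|out_ball arc k v| <= k.+1.
Proof.
rewrite -[k.+1]card_ord -cardsT.
apply: leq_trans (leq_imset_card (fun d : 'I_k.+1 => inZp (v + d) : 'I_n) _).
apply/subset_leq_card/subsetP => w; rewrite inE => /reach_dcycleP [d le_dk ->].
by apply/imsetP; exists (Ordinal (le_dk : d < k.+1)).
Qed.

Lemma dcycle_burning_seq_size (s : seq 'I_n) :
  burning_seq arc s -> n <= 'C((size s).+1, 2).
Proof.
move=> /(burning_seq_card ord0); rewrite card_ord => /leq_trans; apply.
by rewrite -sum_succ_bin2 leq_sum // => i _; apply: card_out_ball_dcycle.
Qed.

Definition triangular_seq (b : nat) : seq 'I_n := mkseq (fun i => inZp 'C(i.+1, 2)) b.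

Lemma triangular_burning_seq (b : nat) : n <= 'C(b.+1, 2) ->
  burning_seq arc (triangular_seq b).
Proof.
move=> le_n_b w.
have [i lt_ib /andP [ge_w lt_w]] :
    exists2 i, i < b & 'C(i.+1, 2) <= w < 'C(i.+2, 2).
  by apply: exists_bracket; rewrite (leq_trans (ltn_ord w)).
exists i; rewrite ?size_mkseq ?nth_mkseq //.
apply/reach_dcycleP; exists (w - 'C(i.+1, 2)).
  by move: lt_w; rewrite binS bin1; lia.
by apply: val_inj; rewrite /= modnDml subnKC // modn_small.
Qed.

Lemma dcycle_burning_numberP (b : nat) : is_burning_number arc b <->
  n <= 'C(b.+1, 2) /\ forall k, n <= 'C(k.+1, 2) -> b <= k.
Proof.
split=> [[[s <- /dcycle_burning_seq_size le_n_s] min_b] | [le_n_b min_b]].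
  by split=> // k /triangular_burning_seq /min_b; rewrite size_mkseq.
split=> [|s /dcycle_burning_seq_size /min_b //].
by exists (triangular_seq b); [rewrite size_mkseq | apply: triangular_burning_seq].
Qed.

End DirectedCycle.

Local Open Scope ring_scope.

Lemma ceil_least_nat (R : archiRealDomainType) (x : R) (P : pred nat) :
  -1 < x -> (forall k : nat, (x <= k%:R) = P k) ->
  forall b : nat, b%:Z = Num.ceil x <-> P b /\ forall k, P k -> (b <= k)%N.
Proof.
move=> gt_x_N1 P_ub b.
have le_ceilP (k : nat) : (Num.ceil x <= k) = P k by rewrite ceil_le_int -P_ub.
split=> [ceilE | [Pb min_b]].
  by split=> [|k]; rewrite -le_ceilP -ceilE ?lez_nat.
have /gez0_abs ceilE : 0 <= Num.ceil x by rewrite ceil_ge0.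
have le_ceil_b : (`|Num.ceil x| <= b)%N by rewrite -lez_nat ceilE le_ceilP.
have le_b_ceil : (b <= `|Num.ceil x|)%N by rewrite min_b // -le_ceilP ceilE.
by rewrite -ceilE; congr Posz; apply/eqP; rewrite eqn_leq le_ceil_b le_b_ceil.
Qed.

Lemma sqrt_triangular_le (R : rcfType) (n b : nat) :
  (Num.sqrt (2 * n%:R + 1 / 4 : R) - 1 / 2 <= b%:R) = (n <= 'C(b.+1, 2))%N.
Proof.
have bin2E : 'C(b.+1, 2)%:R * 2 = b%:R * (b%:R + 1) :> R.
  by rewrite -natrM bin2S_mul2 mulnC -addn1 natrM natrD.
rewrite lerBlDr -(ger0_norm (_ : 0 <= b%:R + 1 / 2)) ?addr_ge0 ?divr_ge0 //.
rewrite -sqrtr_sqr ler_sqrt ?sqr_ge0 //.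
have -> : (b%:R + 1 / 2) ^+ 2 = 2 * 'C(b.+1, 2)%:R + 1 / 4 :> R.
  by rewrite [2 * _]mulrC bin2E; field.
by rewrite lerD2r ler_pM2l // ler_nat.
Qed.

Theorem mainTheorem6 (R : realType) (n : nat) (b : nat) :
  (1 <= n)%N ->
  (is_burning_number (@dcycle_arc n) b <->
   b%:Z = Num.ceil (Num.sqrt (2 * n%:R + 1 / 4 : R) - 1 / 2)).
Proof.
case: n => [//|m] _.
have gt_N1 : -1 < Num.sqrt (2 * m.+1%:R + 1 / 4 : R) - 1 / 2.
  by have := sqrtr_ge0 (2 * m.+1%:R + 1 / 4 : R); lra.
by rewrite dcycle_burning_numberP (ceil_least_nat gt_N1 (sqrt_triangular_le _ _)).
Qed.
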